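(* Let $P$ be a finite lattice. The following are equivalent: (i) $P$ is linearly ordered; (ii) the lattice $(\mathcal{L}_P,\le)$ is distributive; (iii) the lattice $(\mathcal{L}_P,\le)$ is modular.
   Context: For a finite lattice $P$, $\mathcal{L}_P$ denotes the set of maps $f:P\to P$ satisfying (A.1) $a\le f(a)$ for all $a$; (A.2) $a\le b$ implies $f(a)\le f(b)$; (A.3) $f(f(a))=f(a)$, ordered pointwise ($f\le g$ iff $f(a)\le g(a)$ for all $a$); this order makes $\mathcal{L}_P$ a lattice. *)

From HB Require Import structures.
From mathcomp Require Import all_boot all_order.
Set Implicit Arguments. Unset Strict Implicit. Unset Printing Implicit Defensive.
Import Order.TTheory.
Local Open Scope order_scope.

Section ClosureOps.
Context {disp : Order.disp_t} {P : finLatticeType disp}.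

(* f is in L_P: extensive (A.1), monotone (A.2), idempotent (A.3) *)
Definition closure_op (f : {ffun P -> P}) : Prop :=
  [/\ (forall a, a <= f a),
      (forall a b, a <= b -> f a <= f b) &
      (forall a, f (f a) = f a)].

Definition le_fun (f g : {ffun P -> P}) : Prop := forall a, f a <= g a.

Definition is_meetL (f g m : {ffun P -> P}) : Prop :=
  [/\ closure_op m, le_fun m f, le_fun m g &
      forall h, closure_op h -> le_fun h f -> le_fun h g -> le_fun h m].

Definition is_joinL (f g j : {ffun P -> P}) : Prop :=
  [/\ closure_op j, le_fun f j, le_fun g j &
      forall h, closure_op h -> le_fun f h -> le_fun g h -> le_fun j h].

Definition LP_distributive : Prop :=
  forall a b c bc l ab ac r : {ffun P -> P},
    closure_op a -> closure_op b -> closure_op c ->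
    is_joinL b c bc -> is_meetL a bc l ->
    is_meetL a b ab -> is_meetL a c ac -> is_joinL ab ac r ->
    l = r.

Definition LP_modular : Prop :=
  forall a b c bc l ab r : {ffun P -> P},
    closure_op a -> closure_op b -> closure_op c -> le_fun a c ->
    is_meetL b c bc -> is_joinL a bc l ->
    is_joinL a b ab -> is_meetL ab c r ->
    l = r.

Definition linearly_ordered : Prop := forall x y : P, x <= y \/ y <= x.

End ClosureOps.

From HB Require Import structures.
From mathcomp Require Import all_boot all_order.
Set Implicit Arguments. Unset Strict Implicit. Unset Printing Implicit Defensive.
Import Order.TTheory.
Local Open Scope order_scope.

(* A closure operator is determined by its set of fixed points, and the
   fixed points of a meet (resp. join) in L_P are the meets of fixed points
   (resp. the common fixed points).  Over a chain every fixed point of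
   f /\ g is a fixed point of f or of g, which gives distributivity.
   Conversely, for incomparable x, y with m = x /\ y and T the top of P,
   let c be the closure with fixed points {x, T}, b the one with {y, T},
   and a the one with {m, x, T}.  Then a <= c, b /\ c <= a and a \/ b is
   constantly T, so a \/ (b /\ c) = a differs from (a \/ b) /\ c = c at m,
   and modularity fails. *)

Section ClosureOperators.
Context {disp : Order.disp_t} {P : finLatticeType disp}.
Implicit Types (f g h : {ffun P -> P}) (w z : P).

(* [P] may be empty, so its top is built from any given element. *)
Definition top_of w : P := foldr Order.join w (enum P).

Lemma le_top_of w z : z <= top_of w.
Proof.
rewrite /top_of; have : z \in enum P by rewrite mem_enum.
elim: (enum P) => //= a s IH; rewrite in_cons => /orP [/eqP->|/IH zs].
  exact: leUl.
exact: le_trans zs (leUr _ _).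
Qed.

Lemma top_ofE w w' : top_of w = top_of w'.
Proof. by apply/le_anti; rewrite !le_top_of. Qed.

Lemma fixed_le_closure f g z :
  closure_op f -> le_fun f g -> g z = z -> f z = z.
Proof.
by move=> [ext_f _ _] fg gz; apply/le_anti; rewrite ext_f andbT -{2}gz fg.
Qed.

Lemma closure_op_fix_inj f g : closure_op f -> closure_op g ->
  (forall z, f z = z <-> g z = z) -> f = g.
Proof.
move=> [ext_f mono_f idem_f] [ext_g mono_g idem_g] fixE.
apply/ffunP => z; apply/le_anti/andP; split.
  by rewrite -[g z]((fixE (g z)).2 (idem_g z)) mono_f.
by rewrite -[f z]((fixE (f z)).1 (idem_f z)) mono_g.
Qed.

Definition closure_fixing w : {ffun P -> P} :=
  [ffun z => if z <= w then w else top_of w].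

Lemma closure_fixing_op w : closure_op (closure_fixing w).
Proof.
split=> [a|a b ab|a]; rewrite !ffunE.
- by case: ifP => // _; rewrite le_top_of.
- case: (boolP (b <= w)) => bw; first by rewrite (le_trans ab bw).
  by case: ifP => _; rewrite le_top_of.
- case: (boolP (a <= w)) => aw; first by rewrite lexx.
  by case: ifP => // Tw; apply/le_anti; rewrite Tw le_top_of.
Qed.

Lemma closure_fixingE w z :
  closure_fixing w z = z -> z = w \/ z = top_of w.
Proof. by rewrite ffunE; case: ifP => _ <-; [left | right]. Qed.

Lemma le_closure_fixing f w :
  closure_op f -> f w = w -> le_fun f (closure_fixing w).
Proof.
move=> [_ mono_f _] fw z; rewrite ffunE; case: ifP => zw; last exact: le_top_of.
by rewrite -fw mono_f.
Qed.

Definition pmeet f g : {ffun P -> P} := [ffun z => f z `&` g z].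

Lemma pmeet_closure f g :
  closure_op f -> closure_op g -> closure_op (pmeet f g).
Proof.
move=> [ext_f mono_f idem_f] [ext_g mono_g idem_g].
split=> [a|a b ab|a]; rewrite !ffunE.
- by rewrite lexI ext_f ext_g.
- by rewrite leI2 ?mono_f ?mono_g.
- apply/le_anti; rewrite [X in _ && X]lexI ext_f ext_g andbT leI2 //.
    by rewrite -[X in _ <= X]idem_f mono_f ?leIl.
  by rewrite -[X in _ <= X]idem_g mono_g ?leIr.
Qed.

Lemma is_meetL_pmeet f g :
  closure_op f -> closure_op g -> is_meetL f g (pmeet f g).
Proof.
move=> cf cg; split; first exact: pmeet_closure.
- by move=> a; rewrite ffunE leIl.
- by move=> a; rewrite ffunE leIr.
- by move=> h _ hf hg a; rewrite ffunE lexI hf hg.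
Qed.

Lemma is_meetL_pointwise f g m : closure_op f -> closure_op g ->
  is_meetL f g m -> forall z, m z = f z `&` g z.
Proof.
move=> cf cg [_ mf mg m_max] z; apply/le_anti; rewrite lexI mf mg /=.
have := m_max _ (pmeet_closure cf cg) _ _ z; rewrite ffunE; apply=> a;
  by rewrite ffunE ?leIl ?leIr.
Qed.

Lemma is_joinL_fix f g j z : closure_op f -> closure_op g ->
  is_joinL f g j -> (j z = z <-> f z = z /\ g z = z).
Proof.
move=> cf cg [[ext_j _ _] fj gj j_min]; split.
  by move=> jz; split; apply: fixed_le_closure jz.
move=> [fz gz]; apply/le_anti; rewrite ext_j andbT.
have := j_min _ (closure_fixing_op z) (le_closure_fixing cf fz)
  (le_closure_fixing cg gz) z.
by rewrite ffunE lexx.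
Qed.

Lemma is_meetL_le f g : closure_op f -> le_fun f g -> is_meetL f g f.
Proof. by move=> cf fg; split=> // [z|h _ //]; rewrite lexx. Qed.

Lemma is_joinL_ge f g : closure_op f -> le_fun g f -> is_joinL f g f.
Proof. by move=> cf gf; split=> // [z|h _ //]; rewrite lexx. Qed.

Lemma is_meetL_sym f g m : is_meetL f g m -> is_meetL g f m.
Proof. by case=> cm mf mg m_max; split=> // h ch hg hf; apply: m_max. Qed.

Definition adjoin_fix (c : {ffun P -> P}) (m : P) : {ffun P -> P} :=
  [ffun z => if z <= m then m else c z].

Lemma adjoin_fix_closure c m :
  closure_op c -> (forall z, m <= c z) -> closure_op (adjoin_fix c m).
Proof.
move=> [ext_c mono_c idem_c] mc; split=> [a|a b ab|a]; rewrite !ffunE.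
- by case: ifP => // _; apply: ext_c.
- case: (boolP (b <= m)) => bm; first by rewrite (le_trans ab bm).
  by case: ifP => _; [apply: mc | apply: mono_c].
- case: (boolP (a <= m)) => am; first by rewrite lexx.
  have /negbTE-> : ~~ (c a <= m) by apply: contra am; apply: le_trans.
  by rewrite idem_c.
Qed.

Lemma adjoin_fixE c m z : adjoin_fix c m z = z -> z = m \/ c z = z.
Proof. by rewrite ffunE; case: ifP => _ cz; [left; rewrite -cz | right]. Qed.

Lemma linear_meet_fix f g z : linearly_ordered (P := P) ->
  closure_op f -> closure_op g ->
  (f z `&` g z = z <-> f z = z \/ g z = z).
Proof.
move=> lin [ext_f _ _] [ext_g _ _]; split.
  case: (lin (f z) (g z)) => fg; first by rewrite meet_l //; left.
  by rewrite meet_r //; right.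
by case=> ->; [rewrite meet_l | rewrite meet_r].
Qed.

Lemma linear_LP_distributive :
  linearly_ordered (P := P) -> LP_distributive (P := P).
Proof.
move=> lin a b c bc l ab ac r ca cb cc jbc ml mab mac jr.
have cbc : closure_op bc by case: jbc.
have cab : closure_op ab by case: mab.
have cac : closure_op ac by case: mac.
apply: closure_op_fix_inj; [by case: ml | by case: jr | move=> z].
rewrite (is_meetL_pointwise ca cbc ml).
have := linear_meet_fix z lin ca cbc.
have := linear_meet_fix z lin ca cb.
have := linear_meet_fix z lin ca cc.
have := is_joinL_fix z cab cac jr.
have := is_joinL_fix z cb cc jbc.
rewrite (is_meetL_pointwise ca cb mab) (is_meetL_pointwise ca cc mac).
tauto.
Qed.

Lemma LP_distributive_modular :
  LP_distributive (P := P) -> LP_modular (P := P).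
Proof.
move=> D a b c bc l ab r ca cb cc ac mbc jl jab mr.
symmetry; apply: (D c a b ab r a bc l) => //; try exact: is_meetL_sym.
exact/is_meetL_sym/is_meetL_le.
Qed.

Lemma LP_modular_linear :
  LP_modular (P := P) -> linearly_ordered (P := P).
Proof.
move=> M x y; case: (boolP (x <= y)) => [|nxy]; first by left.
case: (boolP (y <= x)) => [|nyx]; first by right.
exfalso; pose m := x `&` y; pose T := top_of x.
pose c := closure_fixing x; pose b := closure_fixing y.
pose a := adjoin_fix c m; pose top : {ffun P -> P} := [ffun => T].
have mx : m <= x := leIl x y.
have my : m <= y := leIr y x.
have cc : closure_op c := closure_fixing_op x.
have cb : closure_op b := closure_fixing_op y.
have ca : closure_op a.
  apply: adjoin_fix_closure => // z.
  by rewrite ffunE; case: ifP; rewrite ?le_top_of.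
have ctop : closure_op top.
  by split=> [z|z z' _|z]; rewrite !ffunE ?lexx ?le_top_of.
have ac : le_fun a c.
  move=> z; rewrite ffunE; case: ifP => // zm.
  by rewrite ffunE (le_trans zm mx).
have bc_a : le_fun (pmeet b c) a.
  move=> z; rewrite [a z]ffunE [pmeet b c z]ffunE.
  case: ifP => zm; last exact: leIr.
  by rewrite !ffunE (le_trans zm mx) (le_trans zm my) meetC.
have ab_top : is_joinL a b top.
  split=> // [z|z|h ch ah bh z]; rewrite ?ffunE ?le_top_of //.
  have [_ _ idem_h] := ch; set w := h z.
  have bw : b w = w by apply: fixed_le_closure (idem_h z).
  have aw : a w = w by apply: fixed_le_closure (idem_h z).
  case: (closure_fixingE bw) => [wy|->]; last by rewrite (top_ofE y x).
  exfalso; rewrite wy in aw.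
  case: (adjoin_fixE aw) => [ym|/closure_fixingE [yx|yT]].
  - by move: nyx; rewrite ym leIl.
  - by move: nyx; rewrite yx lexx.
  - by move: nxy; rewrite yT le_top_of.
have /ffunP/(_ m) : a = c.
  apply: (M a b c (pmeet b c) a top c ca cb cc ac (is_meetL_pmeet cb cc)
    (is_joinL_ge ca bc_a) ab_top).
  by apply/is_meetL_sym/is_meetL_le => // z; rewrite [top z]ffunE le_top_of.
rewrite !ffunE lexx mx => mxE.
by move: nxy; rewrite -mxE leIr.
Qed.

End ClosureOperators.

Theorem mainTheorem8 (disp : Order.disp_t) (P : finLatticeType disp) :
  (linearly_ordered (P := P) <-> LP_distributive (P := P)) /\
  (LP_distributive (P := P) <-> LP_modular (P := P)).
Proof.
have lin_dis := @linear_LP_distributive disp P.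
have dis_mod := @LP_distributive_modular disp P.
have mod_lin := @LP_modular_linear disp P.
by split; split; auto.
Qed.
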